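(* Let $a,b,q$ be complex numbers with $q\ne0$, and define $B_{n,k}(a,b)$ ($n\ge k\ge0$) by $$z^k=\sum_{n=k}^\infty B_{n,k}(a,b)\,z^n\frac{(az;q)_n}{(bz;q)_n}\qquad(k\ge0)$$ in $\mathbb{C}[[z]]$. Put $G_k(z):=\sum_{n=k}^\infty B_{n,k}(a,b)z^n$ and $G(y,z):=\sum_{k=0}^\infty G_k(z)y^k$. Then, as formal power series in $z$ (with coefficients rational functions of $y$), $$G(y,z)=\sum_{n=0}^\infty\frac{(b/y;q)_n}{(a/y;q)_n}(yz)^n+\sum_{n=0}^\infty\big(bzq^n-aG_1(zq^n)\big)\frac{(b/y;q)_n}{(a/y;q)_{n+1}}(yz)^n.$$
   Context: $(x;q)_n=\prod_{j=0}^{n-1}(1-xq^j)$ for $n\ge0$, $(x;q)_0=1$. The family $\{z^n(az;q)_n/(bz;q)_n\}_{n\ge0}$ is a basis of $\mathbb{C}[[z]]$ in the formal sense, so the $B_{n,k}(a,b)$ are uniquely determined. *)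

From HB Require Import structures.
From mathcomp Require Import all_boot all_order all_algebra.
From mathcomp Require Import fraction complex reals.
Set Implicit Arguments. Unset Strict Implicit. Unset Printing Implicit Defensive.
Import Order.TTheory GRing.Theory Num.Theory.
Local Open Scope ring_scope.

Definition qpoch (R : pzRingType) (x q : R) (n : nat) : R :=
  \prod_(j < n) (1 - x * q ^+ j).

Notation fps K := (nat -> K).

Section FPS.
Variable K : comNzRingType.
Definition fps0 : fps K := fun _ => 0.
Definition fps_poly (p : {poly K}) : fps K := fun m => p`_m.
Definition fps_monom (n : nat) (c : K) : fps K := fun m => if m == n then c else 0.
Definition fps_add (f g : fps K) : fps K := fun m => f m + g m.
Definition fps_sub (f g : fps K) : fps K := fun m => f m - g m.
Definition fps_scale (c : K) (f : fps K) : fps K := fun m => c * f m.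
Definition fps_mul (f g : fps K) : fps K :=
  fun m => \sum_(i < m.+1) f i * g (m - i)%N.
Definition fps_dil (c : K) (f : fps K) : fps K := fun m => c ^+ m * f m.
(* sum of a family F with F n of z-adic valuation >= n (the only kind of
   infinite sum used here); the coefficient of z^m is then the finite sum
   over n <= m *)
Definition fps_vsum (F : nat -> fps K) : fps K :=
  fun m => \sum_(n < m.+1) F n m.
End FPS.

Definition fps_map (K L : Type) (phi : K -> L) (f : fps K) : fps L :=
  fun m => phi (f m).

Section FPSInv.
Variable K : fieldType.
Fixpoint inv_seq (f : fps K) (m : nat) : seq K :=
  match m with
  | 0 => [:: (f 0%N)^-1]
  | m'.+1 => let s := inv_seq f m' in
      rcons s (- (f 0%N)^-1 * \sum_(1 <= i < m'.+2) f i * nth 0 s (m'.+1 - i))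
  end.
Definition fps_inv (f : fps K) : fps K := fun m => nth 0 (inv_seq f m) m.
End FPSInv.

Section Objects.
Variable C : fieldType.

Definition B_expansion (a b q : C) (B : nat -> nat -> C) : Prop :=
  forall k : nat,
    fps_poly ('X^k : {poly C}) =
    fps_vsum (fun n => if (k <= n)%N then
       fps_scale (B n k)
         (fps_mul (fps_poly ('X^n * qpoch (a *: 'X) q%:P n))
                  (fps_inv (fps_poly (qpoch (b *: 'X) q%:P n))))
       else fps0 C).

Definition Gk (B : nat -> nat -> C) (k : nat) : fps C :=
  fun m => if (k <= m)%N then B m k else 0.

Notation KC := {fraction {poly C}}.
Definition cst (c : C) : KC := tofrac (c%:P).
Definition yv : KC := tofrac ('X : {poly C}).

Definition Gyz (B : nat -> nat -> C) : fps KC :=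
  fps_vsum (fun k => fps_map (fun c => cst c * yv ^+ k) (Gk B k)).

Definition G_rhs (a b q : C) (B : nat -> nat -> C) : fps KC :=
  fps_add
    (fps_vsum (fun n => fps_monom n
        (qpoch (cst b / yv) (cst q) n / qpoch (cst a / yv) (cst q) n * yv ^+ n)))
    (fps_vsum (fun n => fps_mul
        (fps_sub (fps_monom 1 (cst b * cst q ^+ n))
                 (fps_scale (cst a) (fps_map cst (fps_dil (q ^+ n) (Gk B 1)))))
        (fps_monom n
           (qpoch (cst b / yv) (cst q) n / qpoch (cst a / yv) (cst q) n.+1
            * yv ^+ n)))).
End Objects.

(* Write phi_n(z) = z^n (az;q)_n / (bz;q)_n.  The phi_n are triangular
   (phi_n = z^n + O(z^(n+1))), so expansions in them are unique, and
   (1 - bz) q^n phi_(n+1)(z) = z (1 - az) phi_n(qz).  Substituting z -> qz in the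
   expansions of z^k and z^(k+1), multiplying by z (1 - az) and comparing
   coefficients gives B_(m,0) = [m = 0] and
     q^(k+1) (B_(m+1,k+1) - a B_(m+1,k+2)) = q^m (q B_(m,k) - b B_(m,k+1)).
   Summed over k, this says that the coefficient L_m(y) of z^m in G satisfies
     (y - a) L_(m+1)(y) = y ([m = 0] b - a B_(m+1,1)) + (y - b) y q^m L_m(y/q).
   The coefficient of z^m of the right-hand side obeys the same recursion, since
   (x/y;q)_(n+1) = (1 - x/y) (x/(y/q);q)_n, and both start from 1.  Power series
   are handled through their truncations modulo z^N. *)

From Stdlib Require Import Setoid Morphisms.
From HB Require Import structures.
From mathcomp Require Import all_boot all_order all_algebra.
From mathcomp Require Import fraction complex reals.
From mathcomp Require Import zify ring.
Set Implicit Arguments. Unset Strict Implicit. Unset Printing Implicit Defensive.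
Import Order.TTheory GRing.Theory Num.Theory.
Local Open Scope ring_scope.

Definition eqmodX (K : nzSemiRingType) N (p r : {poly K}) : Prop :=
  take_poly N p = take_poly N r.

Notation "p = r %[modX N ]" := (eqmodX N p r)
  (at level 70, r at next level, format "p  =  r  %[modX  N ]").

Section PolyModX.
Variable K : nzSemiRingType.
Implicit Types (p r : {poly K}).

Lemma eqmodXP N p r :
  p = r %[modX N] <-> (forall i, (i < N)%N -> p`_i = r`_i).
Proof.
rewrite /eqmodX; split=> [prN i ltiN | prN].
  by have := congr1 (fun s : {poly K} => s`_i) prN; rewrite !coef_take_poly ltiN.
by apply/polyP => i; rewrite !coef_take_poly; case: ifP => // /prN.
Qed.

#[export] Instance eqmodX_equiv N : Equivalence (@eqmodX K N).
Proof. by split=> [p|p r|p r s] //; rewrite /eqmodX => ->. Qed.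

#[export] Instance eqmodX_add N :
  Proper (@eqmodX K N ==> @eqmodX K N ==> @eqmodX K N) +%R.
Proof.
move=> p p' /eqmodXP pN r r' /eqmodXP rN; apply/eqmodXP => i ltiN.
by rewrite !coefD pN // rN.
Qed.

#[export] Instance eqmodX_mul N :
  Proper (@eqmodX K N ==> @eqmodX K N ==> @eqmodX K N) *%R.
Proof.
move=> p p' /eqmodXP pN r r' /eqmodXP rN; apply/eqmodXP => i ltiN.
rewrite !coefM; apply: eq_bigr => j _.
by rewrite pN ?rN //; have := ltn_ord j; lia.
Qed.

Lemma eqmodX_sum N n (F G : 'I_n -> {poly K}) :
  (forall j, F j = G j %[modX N]) -> \sum_(j < n) F j = \sum_(j < n) G j %[modX N].
Proof.
by move=> FG; rewrite /eqmodX !take_poly_sum; apply: eq_bigr => j _; apply: FG.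
Qed.

End PolyModX.

Section PolyModXRing.
Variable K : nzRingType.
Implicit Types (p r D : {poly K}).

#[export] Instance eqmodX_opp N : Proper (@eqmodX K N ==> @eqmodX K N) -%R.
Proof.
by move=> p p' /eqmodXP pN; apply/eqmodXP => i ltiN; rewrite !coefN pN.
Qed.

Lemma eqmodX_mulI N D p r :
  D`_0 = 1 -> D * p = D * r %[modX N] -> p = r %[modX N].
Proof.
move=> D0 /eqmodXP DpN; apply/eqmodXP; elim/ltn_ind => i IHi ltiN.
apply/eqP; rewrite -subr_eq0 -coefB.
move/eqP: (DpN i ltiN); rewrite -subr_eq0 -coefB -mulrBr coefM big_ord_recl.
rewrite subn0 D0 mul1r big1 ?addr0 // => j _.
by rewrite lift0 coefB IHi ?subrr ?mulr0 //; have := ltn_ord j; lia.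
Qed.

End PolyModXRing.

Section PolyModXComm.
Variable K : comNzRingType.
Implicit Types (p : {poly K}) (c : K) (f g : fps K).

Lemma coef_comp_scaleX c p i : (p \Po (c *: 'X))`_i = c ^+ i * p`_i.
Proof.
elim/poly_ind: p i => [|p d IHp] i; first by rewrite comp_poly0 !coef0 mulr0.
rewrite comp_poly_MXaddC -scalerAr !coefD coefZ !coefMX !coefC.
case: i => [|i] /=; first by rewrite mulr0 add0r expr0 mul1r.
by rewrite IHp !addr0 mulrA -exprS.
Qed.

Lemma comp_scaleX_Xn c n : 'X^n \Po (c *: 'X) = (c ^+ n)%:P * 'X^n.
Proof.
apply/polyP => i; rewrite coef_comp_scaleX coefCM !coefXn.
by case: eqP => [->|_]; rewrite ?mulr0.
Qed.

#[export] Instance eqmodX_comp_scaleX N c :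
  Proper (@eqmodX K N ==> @eqmodX K N) (comp_poly (c *: 'X)).
Proof.
move=> p p' /eqmodXP pN; apply/eqmodXP => i ltiN.
by rewrite !coef_comp_scaleX pN.
Qed.

Definition fps_trunc N f : {poly K} := \poly_(i < N) f i.

Lemma fps_truncM N f g :
  fps_trunc N (fps_mul f g) = fps_trunc N f * fps_trunc N g %[modX N].
Proof.
apply/eqmodXP => i ltiN; rewrite coefM !coef_poly ltiN; apply: eq_bigr => j _.
by rewrite !coef_poly !ifT //; have := ltn_ord j; lia.
Qed.

Lemma fps_trunc_poly N p : fps_trunc N (fps_poly p) = p %[modX N].
Proof. by apply/eqmodXP => i ltiN; rewrite coef_poly ltiN. Qed.

End PolyModXComm.

Section FpsInverse.
Variable K : fieldType.
Implicit Type f : fps K.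

Lemma size_inv_seq f m : size (inv_seq f m) = m.+1.
Proof. by elim: m => [|m IHm] //=; rewrite size_rcons IHm. Qed.

Lemma nth_inv_seq f m i : (i <= m)%N -> nth 0 (inv_seq f m) i = fps_inv f i.
Proof.
elim: m => [|m IHm] leim; first by case: i leim.
have [->|neq_im] := eqVneq i m.+1; first by [].
by rewrite /= nth_rcons size_inv_seq ifT ?IHm //; lia.
Qed.

Lemma fps_invS f m :
  fps_inv f m.+1 = - (f 0%N)^-1 * \sum_(i < m.+1) f i.+1 * fps_inv f (m - i).
Proof.
rewrite {1}/fps_inv /= nth_rcons size_inv_seq ltnn eqxx big_add1 /= big_mkord.
by congr (_ * _); apply: eq_bigr => i _; rewrite subSS nth_inv_seq ?leq_subr.
Qed.

Lemma fps_mulV f m : f 0%N != 0 -> fps_mul f (fps_inv f) m = (m == 0)%:R.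
Proof.
move=> f0; case: m => [|m]; first by rewrite /fps_mul big_ord1 /fps_inv /= mulfV.
rewrite /fps_mul big_ord_recl subn0 fps_invS mulrA mulrN mulfV // mulN1r.
by under [X in _ + X]eq_bigr => i _ do rewrite lift0 subSS; rewrite addNr.
Qed.

Lemma fps_trunc_inv N (p : {poly K}) :
  p`_0 != 0 -> p * fps_trunc N (fps_inv (fps_poly p)) = 1 %[modX N].
Proof.
move=> p0; transitivity (fps_trunc N (fps_mul (fps_poly p) (fps_inv (fps_poly p)))).
  by rewrite fps_truncM fps_trunc_poly.
by apply/eqmodXP => i ltiN; rewrite coef_poly ltiN fps_mulV // coef1.
Qed.

End FpsInverse.

Section FpsMonomials.
Variable K : comNzRingType.

Lemma fps_vsum_monom (c : nat -> K) m : fps_vsum (fun n => fps_monom n (c n)) m = c m.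
Proof.
rewrite /fps_vsum big_ord_recr /= /fps_monom eqxx big1 ?add0r // => i _.
by rewrite ifN // neq_ltn ltn_ord orbT.
Qed.

Lemma fps_mul_monom (f : fps K) n c m :
  (n <= m)%N -> fps_mul f (fps_monom n c) m = f (m - n)%N * c.
Proof.
move=> lenm; have ltm : (m - n < m.+1)%N by rewrite ltnS leq_subr.
rewrite /fps_mul (bigD1 (Ordinal ltm)) //= big1 ?addr0 => [|i neq_i].
  by rewrite /fps_monom subKn // eqxx.
rewrite /fps_monom ifN ?mulr0 //; apply: contra neq_i => /eqP eq_i.
by apply/eqP/val_inj => /=; have := ltn_ord i; lia.
Qed.

End FpsMonomials.

Lemma qpochS (R : pzRingType) (x q : R) n :
  qpoch x q n.+1 = (1 - x) * qpoch (x * q) q n.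
Proof.
rewrite /qpoch big_ord_recl expr0 mulr1; congr (_ * _).
by apply: eq_bigr => j _; rewrite lift0 exprS mulrA.
Qed.

Section QPochhammerPoly.
Variables (K : comNzRingType) (c q : K).

Lemma qpoch_scaleX_coef0 n : (qpoch (c *: 'X) q%:P n)`_0 = 1.
Proof.
rewrite -horner_coef0 /qpoch horner_prod big1 // => j _.
by rewrite !hornerE subr0.
Qed.

Lemma qpochSX n :
  qpoch (c *: 'X) q%:P n.+1 = (1 - c *: 'X) * (qpoch (c *: 'X) q%:P n \Po (q *: 'X)).
Proof.
rewrite qpochS /qpoch rmorph_prod; congr (_ * _); apply: eq_bigr => j _.
rewrite rmorphB rmorph1 rmorphM rmorphXn /= comp_polyZ comp_polyX comp_polyC.
by congr (1 - _ * _); rewrite -!mul_polyC; ring.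
Qed.

End QPochhammerPoly.

Section Basis.
Variables (C : fieldType) (a b q : C).

Local Notation apoch n := (qpoch (a *: 'X) q%:P n).
Local Notation bpoch n := (qpoch (b *: 'X) q%:P n).
Local Notation dil p := (p \Po (q *: 'X)).

Definition phi n : fps C :=
  fps_mul (fps_poly ('X^n * apoch n)) (fps_inv (fps_poly (bpoch n))).

Definition Phi N n : {poly C} := fps_trunc N (phi n).

Lemma PhiE N n :
  Phi N n = 'X^n * (apoch n * fps_trunc N (fps_inv (fps_poly (bpoch n)))) %[modX N].
Proof. by rewrite /Phi fps_truncM fps_trunc_poly mulrA. Qed.

Lemma bpoch_Phi N n : bpoch n * Phi N n = 'X^n * apoch n %[modX N].
Proof.
rewrite PhiE; set T := fps_trunc N _.
have bT : bpoch n * T = 1 %[modX N].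
  by apply: fps_trunc_inv; rewrite qpoch_scaleX_coef0 oner_neq0.
have -> : bpoch n * ('X^n * (apoch n * T)) = 'X^n * apoch n * (bpoch n * T) by ring.
by rewrite bT mulr1.
Qed.

Lemma Phi0 N : Phi N 0 = 1 %[modX N].
Proof. by have := bpoch_Phi N 0; rewrite /qpoch !big_ord0 !mul1r. Qed.

Lemma phi_lt n i : (i < n)%N -> phi n i = 0.
Proof.
move=> ltin; have /eqmodXP/(_ i (ltnSn i)) := PhiE i.+1 n.
by rewrite coef_poly ltnSn coefXnM ltin.
Qed.

Lemma phi_nn n : phi n n = 1.
Proof.
have /eqmodXP/(_ n (ltnSn n)) := PhiE n.+1 n.
rewrite coef_poly ltnSn coefXnM ltnn subnn coefM big_ord1 coef_poly /=.
by rewrite qpoch_scaleX_coef0 mul1r /fps_inv /= /fps_poly qpoch_scaleX_coef0 invr1.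
Qed.

Lemma Phi_top N : Phi N N = 0 %[modX N].
Proof. by apply/eqmodXP => i ltiN; rewrite coef_poly ltiN phi_lt // coef0. Qed.

Lemma Phi_succ N n :
  (1 - b *: 'X) * (q ^+ n)%:P * Phi N n.+1
  = 'X * (1 - a *: 'X) * dil (Phi N n) %[modX N].
Proof.
apply: (@eqmodX_mulI _ _ (dil (bpoch n))).
  by rewrite coef_comp_scaleX mul1r qpoch_scaleX_coef0.
have -> : dil (bpoch n) * ((1 - b *: 'X) * (q ^+ n)%:P * Phi N n.+1)
        = (q ^+ n)%:P * (bpoch n.+1 * Phi N n.+1) by rewrite qpochSX; ring.
have -> : dil (bpoch n) * ('X * (1 - a *: 'X) * dil (Phi N n))
        = 'X * (1 - a *: 'X) * dil (bpoch n * Phi N n) by rewrite comp_polyM; ring.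
rewrite !bpoch_Phi qpochSX comp_polyM comp_scaleX_Xn.
by rewrite /eqmodX exprS; congr take_poly; ring.
Qed.

Definition phi_sum N (c : nat -> C) : {poly C} := \sum_(n < N) (c n)%:P * Phi N n.

Lemma coef_phi_sum N c n :
  (n < N)%N -> (phi_sum N c)`_n = \sum_(j < n.+1) c j * phi j n.
Proof.
move=> ltnN; rewrite coef_sum (big_ord_widen N (fun j => c j * phi j n) ltnN).
rewrite [RHS]big_mkcond /=; apply: eq_bigr => j _; rewrite coefCM coef_poly ltnN.
by case: ltnP => // ltnj; rewrite phi_lt ?mulr0.
Qed.

Lemma phi_sum_inj N c c' :
  phi_sum N c = phi_sum N c' %[modX N] -> forall n, (n < N)%N -> c n = c' n.
Proof.
move=> /eqmodXP cc'; elim/ltn_ind => n IHn ltnN; have := cc' n ltnN.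
rewrite !coef_phi_sum // !big_ord_recr /= !phi_nn !mulr1.
rewrite (eq_bigr (fun j : 'I_n => c' j * phi j n)) => [/addrI //|j _].
by rewrite IHn // (ltn_trans _ ltnN).
Qed.

Lemma phi_sumB N x y c c' :
  phi_sum N (fun n => x * c n - y * c' n) = x%:P * phi_sum N c - y%:P * phi_sum N c'.
Proof.
rewrite /phi_sum !mulr_sumr -sumrB; apply: eq_bigr => n _.
by rewrite polyCB !polyCM; ring.
Qed.

Lemma phi_sum_shift N (d : nat -> C) :
  \sum_(n < N) (d n)%:P * Phi N n.+1
  = phi_sum N (fun n => if n is n'.+1 then d n' else 0) %[modX N].
Proof.
pose d' n := if n is n'.+1 then d n' else 0.
transitivity (\sum_(n < N.+1) (d' n)%:P * Phi N n).
  by rewrite big_ord_recl polyC0 mul0r add0r.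
by rewrite big_ord_recr /= Phi_top mulr0 addr0.
Qed.

Lemma phi_sum_succ N (c : nat -> C) :
  (1 - b *: 'X) * \sum_(n < N) (c n * q ^+ n)%:P * Phi N n.+1
  = 'X * (1 - a *: 'X) * dil (phi_sum N c) %[modX N].
Proof.
rewrite mulr_sumr /phi_sum rmorph_sum mulr_sumr; apply: eqmodX_sum => n.
have -> : (1 - b *: 'X) * ((c n * q ^+ n)%:P * Phi N n.+1)
        = (c n)%:P * ((1 - b *: 'X) * (q ^+ n)%:P * Phi N n.+1).
  by rewrite polyCM; ring.
by rewrite Phi_succ rmorphM /= comp_polyC /eqmodX; congr take_poly; ring.
Qed.

End Basis.

Section Expansion.
Variables (C : fieldType) (a b q : C) (B : nat -> nat -> C).
Hypothesis HB : B_expansion a b q B.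

Local Notation beta n k := (Gk B k n).
Local Notation phi_sum := (phi_sum a b q).

Lemma Xn_phi_sum N k : 'X^k = phi_sum N (fun n => beta n k) %[modX N].
Proof.
apply/eqmodXP => i ltiN; rewrite coef_phi_sum // [LHS](congr1 (fun f => f i) (HB k)).
by apply: eq_bigr => n _; rewrite /Gk; case: ifP; rewrite ?mul0r.
Qed.

Lemma B_col0 m : beta m 0 = (m == 0)%:R.
Proof.
apply: (@phi_sum_inj _ a b q m.+1 (fun n => beta n 0) (fun n => (n == 0)%:R)) => //.
rewrite -Xn_phi_sum expr0.
rewrite /phi_sum big_ord_recl big1 => [|n _]; last by rewrite polyC0 mul0r.
by rewrite Phi0 mul1r addr0.
Qed.

Lemma B_rec m k :
  q ^+ k.+1 * beta m.+1 k.+1 - a * q ^+ k.+1 * beta m.+1 k.+2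
  = (q * beta m k - b * beta m k.+1) * q ^+ m.
Proof.
pose c n := q * beta n k - b * beta n k.+1.
apply: (@phi_sum_inj _ a b q m.+2
  (fun n => q ^+ k.+1 * beta n k.+1 - a * q ^+ k.+1 * beta n k.+2)
  (fun n => if n is n'.+1 then c n' * q ^+ n' else 0)) => //.
rewrite -phi_sum_shift phi_sumB -!Xn_phi_sum.
apply: (@eqmodX_mulI _ _ (1 - b *: 'X)).
  by rewrite coefB coef1 coefZ coefX mulr0 subr0.
rewrite phi_sum_succ phi_sumB -!Xn_phi_sum.
rewrite rmorphB !rmorphM /= !comp_polyC !comp_scaleX_Xn.
by rewrite /eqmodX !exprS; congr take_poly; rewrite -!mul_polyC !polyCM; ring.
Qed.

End Expansion.

Section GeneratingFunction.
Variables (F : fieldType) (a b q : F) (beta : nat -> nat -> F).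
Hypothesis qN0 : q != 0.
Hypothesis beta_col0 : forall m, beta m 0 = (m == 0)%:R.
Hypothesis beta_lt : forall m k, (m < k)%N -> beta m k = 0.
Hypothesis beta_rec : forall m k,
  q ^+ k.+1 * beta m.+1 k.+1 - a * q ^+ k.+1 * beta m.+1 k.+2
  = (q * beta m k - b * beta m k.+1) * q ^+ m.

(* With [beta n k = B_(n,k)], [row_poly m] is L_m(y), the coefficient of z^m
   in G(y,z). *)
Definition row_poly m : {poly F} := \poly_(k < m.+1) beta m k.

Lemma coef_row_poly m k : (row_poly m)`_k = beta m k.
Proof. by rewrite coef_poly; case: ltnP => // /beta_lt ->. Qed.

Lemma row_poly_rec m :
  ('X - a%:P) * row_poly m.+1
  = 'X * (((m == 0)%:R * b - a * beta m.+1 1)%:P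
          + ('X - b%:P) * ((q ^+ m)%:P * (row_poly m \Po (q^-1 *: 'X)))).
Proof.
apply/polyP => j; rewrite mulrBl coefB !coefXM coefCM !coef_row_poly.
case: j => [|j] /=; first by rewrite beta_col0 mulr0 subr0.
rewrite coefD coefC mulrBl coefB coefXM !coefCM !coef_comp_scaleX !coef_row_poly.
case: j => [|j] /=.
  by rewrite !beta_col0 expr0 mul1r; case: m => [|m] /=; rewrite ?mulr1n ?mulr0n; ring.
rewrite add0r !exprVn; have qjN0 := expf_neq0 j qN0.
apply: (mulfI (expf_neq0 j.+1 qN0)).
rewrite mulrBr [q ^+ j.+1 * (a * _)]mulrA [q ^+ j.+1 * a]mulrC beta_rec.
by rewrite !exprS; field; rewrite qN0 qjN0.
Qed.

(* [shiftG1_coef n j] is the coefficient of z^j in b z q^n - a G_1(z q^n), and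
   [rhs_coef m y] the coefficient of z^m on the right-hand side. *)
Definition poch_ratio n Y := qpoch (b / Y) q n / qpoch (a / Y) q n.
Definition poch_ratioS n Y := qpoch (b / Y) q n / qpoch (a / Y) q n.+1.
Definition shiftG1_coef n j :=
  (if j == 1%N then b * q ^+ n else 0) - a * ((q ^+ n) ^+ j * beta j 1).

Definition rhs_coef m Y :=
  poch_ratio m Y * Y ^+ m
  + \sum_(n < m.+1) shiftG1_coef n (m - n)%N * (poch_ratioS n Y * Y ^+ n).

Lemma qpoch_divS x n Y :
  qpoch (x / Y) q n.+1 = (1 - x / Y) * qpoch (x / (q^-1 * Y)) q n.
Proof. by rewrite qpochS invfM invrK; congr (_ * qpoch _ _ _); ring. Qed.

Lemma poch_ratio_shift n Y :
  poch_ratio n.+1 Y = (1 - b / Y) / (1 - a / Y) * poch_ratio n (q^-1 * Y).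
Proof. by rewrite /poch_ratio !qpoch_divS mulf_div. Qed.

Lemma poch_ratioS_shift n Y :
  poch_ratioS n.+1 Y = (1 - b / Y) / (1 - a / Y) * poch_ratioS n (q^-1 * Y).
Proof. by rewrite /poch_ratioS !qpoch_divS mulf_div. Qed.

Lemma shiftG1_coef_shift n j : shiftG1_coef n.+1 j = q ^+ j * shiftG1_coef n j.
Proof.
rewrite /shiftG1_coef exprS exprMn; case: eqP => [->|_]; rewrite ?expr1; ring.
Qed.

Lemma exprS_divq Y n : Y ^+ n.+1 = Y * q ^+ n * (q^-1 * Y) ^+ n.
Proof. by rewrite exprMn exprVn exprS; field; rewrite expf_neq0. Qed.

Lemma rhs_coef_shift m Y :
  rhs_coef m.+1 Y = shiftG1_coef 0 m.+1 * poch_ratioS 0 Y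
    + (1 - b / Y) / (1 - a / Y) * Y * q ^+ m * rhs_coef m (q^-1 * Y).
Proof.
rewrite /rhs_coef big_ord_recl subn0 expr0 mulr1 mulrDr mulr_sumr addrCA.
congr (_ + _); congr (_ + _).
  by rewrite poch_ratio_shift exprS_divq; ring.
apply: eq_bigr => i _; rewrite lift0 subSS shiftG1_coef_shift poch_ratioS_shift.
rewrite exprS_divq (_ : q ^+ m = q ^+ i * q ^+ (m - i)); first ring.
by rewrite -exprD subnKC // -ltnS.
Qed.

Lemma rhs_coef_rec m Y : Y != 0 -> Y != a ->
  (Y - a) * rhs_coef m.+1 Y
  = Y * (((m == 0)%:R * b - a * beta m.+1 1)
         + (Y - b) * (q ^+ m * rhs_coef m (q^-1 * Y))).
Proof.
move=> Y0 Ya; rewrite rhs_coef_shift /shiftG1_coef /poch_ratioS /qpoch.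
rewrite !big_ord0 big_ord1 !expr0 expr1n !mul1r mulr1.
rewrite (_ : (m.+1 == 1)%N = (m == 0)%N) //.
have -> : (if (m == 0)%N then b else 0) = (m == 0)%:R * b.
  by case: (m == 0)%N; rewrite ?mul1r ?mul0r.
by field; rewrite Y0 subr_eq0 Ya.
Qed.

Lemma row_poly_horner m Y :
  Y != 0 -> (forall j, Y != a * q ^+ j) -> (row_poly m).[Y] = rhs_coef m Y.
Proof.
elim: m Y => [|m IHm] Y Y0 Yaq.
  rewrite horner_poly /rhs_coef /poch_ratio /shiftG1_coef !big_ord1 subnn.
  by rewrite beta_col0 beta_lt // /qpoch !big_ord0 /= divr1; ring.
have Ya : Y != a by have := Yaq 0%N; rewrite expr0 mulr1.
have YaN0 : Y - a != 0 by rewrite subr_eq0.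
apply: (mulfI YaN0); rewrite rhs_coef_rec // -IHm.
- have := congr1 (horner^~ Y) (row_poly_rec m).
  by rewrite /= !hornerE horner_comp !hornerE.
- by rewrite mulf_neq0 ?invr_eq0.
move=> j; apply: contra (Yaq j.+1) => /eqP Yq.
by rewrite exprS mulrCA -Yq mulVKf.
Qed.

End GeneratingFunction.

Section Specialization.
Variable C : fieldType.

HB.instance Definition _ :=
  GRing.RMorphism.copy (@cst C) (@tofrac {poly C} \o polyC).

Lemma yv_neq_cst (x : C) : yv C != cst x.
Proof.
rewrite /yv /cst tofrac_eq; apply/eqP => /(congr1 (fun p : {poly C} => p`_1)).
by rewrite coefX coefC; apply/eqP; rewrite oner_eq0.
Qed.

Lemma Gyz_horner (B : nat -> nat -> C) m :
  Gyz B m = (row_poly (fun n k => cst (Gk B k n)) m).[yv C].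
Proof. by rewrite horner_poly. Qed.

Lemma G_rhs_coef (a b q : C) (B : nat -> nat -> C) m :
  G_rhs a b q B m
  = rhs_coef (cst a) (cst b) (cst q) (fun n k => cst (Gk B k n)) m (yv C).
Proof.
rewrite /G_rhs /fps_add fps_vsum_monom /rhs_coef; congr (_ + _).
apply: eq_bigr => n _; rewrite (fps_mul_monom _ _ (leq_ord n)).
by rewrite /fps_sub /fps_scale /fps_map /fps_dil /fps_monom rmorphM !rmorphXn.
Qed.

End Specialization.

Theorem lemma2p2 (R : realType) (a b q : R[i]) (B : nat -> nat -> R[i]) :
  q != 0 ->
  B_expansion a b q B ->
  forall m : nat, Gyz B m = G_rhs a b q B m.
Proof.
move=> qN0 HB m; rewrite Gyz_horner G_rhs_coef; apply: row_poly_horner.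
- by rewrite fmorph_eq0.
- by move=> n; rewrite (B_col0 HB) rmorph_nat.
- by move=> n k ltnk; rewrite /Gk leqNgt ltnk rmorph0.
- move=> n k; have := congr1 (@cst _) (B_rec HB n k).
  by rewrite !(rmorphB, rmorphM, rmorphXn).
- by have := yv_neq_cst (0 : R[i]); rewrite rmorph0.
- by move=> j; have := yv_neq_cst (a * q ^+ j); rewrite rmorphM rmorphXn.
Qed.
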